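(* Let $d\in\mathbb Z_{>0}$ and $s\in\{-1,1\}$. Then there exist infinitely many positive integers $n$ of the special form such that $\Phi_n(T)\equiv 1+sT^d \pmod{T^{2d}}$ in $\mathbb Z[T]$.
   Context: $\Phi_n(T)\in\mathbb Z[T]$ denotes the $n$-th cyclotomic polynomial (the monic minimal polynomial over $\mathbb Q$ of a primitive $n$-th root of unity). A positive integer $n$ is of the special form if $n=pm$ where $p$ is a prime number and $m$ is a positive integer dividing $p-1$. *)

From HB Require Import structures.
From mathcomp Require Import all_boot all_order all_algebra all_field.
Set Implicit Arguments. Unset Strict Implicit. Unset Printing Implicit Defensive.
Import GRing.Theory.

Definition special_form (n : nat) : Prop :=
  exists p m : nat, [/\ prime p, (0 < m)%N, (m %| p.-1)%N & n = (p * m)%N].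

From HB Require Import structures.
From mathcomp Require Import all_boot all_order all_algebra all_field.
From mathcomp Require Import ring zify.
Set Implicit Arguments. Unset Strict Implicit. Unset Printing Implicit Defensive.
Import GRing.Theory.
Local Open Scope ring_scope.

(* For a prime q not dividing m, Phi_m(X^q) = Phi_(qm) Phi_m.  If
   Phi_m = 1 + a X^k mod X^(2k), then Phi_m(X^q) = 1 mod X^(2k), hence Phi_(qm) is
   the inverse 1 - a X^k of 1 + a X^k modulo X^(2k).  Starting from Phi_q = 1 + X
   mod X^2, a product r of t distinct primes has Phi_r = 1 - (-1)^t X mod X^2; taking
   all prime factors of d among them, and one or two large primes to fix the parity
   of t, gives Phi_(rd) = Phi_r(X^d) = 1 - s X^d mod X^(2d).  It remains to pick a
   large prime p = 1 mod m, m = rd, and n = pm.  Such a p is any prime factor of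
   Phi_m(a), where a is a multiple of m N! that is not a root of Phi_m (Phi_m^2 - 1):
   as a^m = 1 mod p, p is prime to a, hence exceeds N, and a has order m mod p. *)

Section CongruenceModXn.

Variable R : idomainType.
Implicit Types (f g : {poly R}) (a : R).

Lemma dvdp_Xn_comp_Xn k j f g :
  'X^k %| f - g -> 'X^(k * j) %| (f \Po 'X^j) - (g \Po 'X^j).
Proof.
by move/(dvdp_comp_poly 'X^j); rewrite comp_polyB comp_Xn_poly -exprM mulnC.
Qed.

Lemma dvdp_Xn_inv k a f :
  'X^(2 * k) %| f * (1 + a *: 'X^k) - 1 -> 'X^(2 * k) %| f - (1 - a *: 'X^k).
Proof.
move=> dvd_f; have -> : f - (1 - a *: 'X^k)
    = (f * (1 + a *: 'X^k) - 1) * (1 - a *: 'X^k) + f * a%:P ^+ 2 * 'X^(2 * k).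
  by rewrite -!mul_polyC mulnC exprM; ring.
by rewrite dvdp_addr ?dvdp_mulIr // dvdp_mulr.
Qed.

End CongruenceModXn.

Lemma perm_divisors_primeM q m : prime q -> (0 < m)%N ->
  perm_eq (divisors (q * m))
    ([seq (q * e)%N | e <- divisors m] ++ [seq e <- divisors m | ~~ (q %| e)%N]).
Proof.
move=> q_pr m_gt0; have q_gt0 := prime_gt0 q_pr.
have qm_gt0 : (0 < q * m)%N by rewrite muln_gt0 q_gt0.
apply: uniq_perm; first exact: divisors_uniq.
  have mulq_inj : injective (muln q) by move=> e f /eqP; rewrite eqn_pmul2l // => /eqP.
  rewrite cat_uniq map_inj_uniq ?filter_uniq ?divisors_uniq //= andbT.
  apply/hasPn => e; rewrite mem_filter => /andP[qNe _].
  by apply/mapP => -[f _ ef]; rewrite ef dvdn_mulr in qNe.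
move=> e; rewrite mem_cat mem_filter -!dvdn_divisors //.
apply/idP/orP => [e_dvd | [/mapP[f] | /andP[_ e_dvd]]].
- have [q_e | qNe] := boolP (q %| e)%N; [left | right].
    apply/mapP; exists (e %/ q)%N; last by rewrite mulnC divnK.
    by rewrite -dvdn_divisors // -(dvdn_pmul2l q_gt0) mulnC divnK.
  by rewrite /= -(Gauss_dvdr m (_ : coprime e q)) // coprime_sym prime_coprime.
- by rewrite -dvdn_divisors // => f_dvd ->; rewrite dvdn_pmul2l.
- by rewrite dvdn_mull.
Qed.

Lemma prod_Cyclotomic_comp_Xp q m : prime q -> (0 < m)%N ->
  \prod_(e <- divisors m) ('Phi_e \Po 'X^q)
    = \prod_(e <- divisors m) ('Phi_(q * e) * (if (q %| e)%N then 1 else 'Phi_e)).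
Proof.
move=> q_pr m_gt0; have q_gt0 := prime_gt0 q_pr.
rewrite -(big_morph (fun p => p \Po _) (fun p r => comp_polyM p r _) (comp_polyC 1 _)).
rewrite prod_Cyclotomic // comp_polyB comp_Xn_poly comp_polyC -exprM.
rewrite -prod_Cyclotomic ?muln_gt0 ?q_gt0 //.
rewrite (perm_big _ (perm_divisors_primeM q_pr m_gt0)) big_cat big_map big_split /=.
rewrite big_filter; congr (_ * _); rewrite big_mkcond; apply: eq_bigr => e _; exact: if_neg.
Qed.

Lemma Cyclotomic_comp_Xp q m : prime q -> (0 < m)%N ->
  'Phi_m \Po 'X^q = 'Phi_(q * m) * (if (q %| m)%N then 1 else 'Phi_m).
Proof.
move=> q_pr; elim/ltn_ind: m => m IHm m_gt0.
set F := fun e => 'Phi_(q * e) * (if (q %| e)%N then 1 else 'Phi_e).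
have F_monic e : F e \is monic.
  by rewrite rpredM ?Cyclotomic_monic //; case: ifP; rewrite ?monic1 ?Cyclotomic_monic.
have m_div : m \in divisors m by rewrite -dvdn_divisors.
have := prod_Cyclotomic_comp_Xp q_pr m_gt0; rewrite !(big_rem _ m_div) /=.
rewrite (eq_big_seq F) => [|e]; last first.
  rewrite mem_rem_uniq ?divisors_uniq // inE -dvdn_divisors // => /andP[e_neq_m e_dvd].
  by apply: IHm; [rewrite ltn_neqAle e_neq_m dvdn_leq | exact: dvdn_gt0 e_dvd].
by apply/mulIf/monic_neq0/monic_prod => e _; apply: F_monic.
Qed.

Lemma Cyclotomic_mul_comp r k : (0 < r)%N -> (0 < k)%N ->
  {subset primes k <= primes r} -> 'Phi_(r * k) = 'Phi_r \Po 'X^k.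
Proof.
move=> r_gt0; elim/ltn_ind: k => k IHk k_gt0 sub_k_r.
have [k_le1 | k_gt1] := leqP k 1.
  have -> : k = 1%N by apply/eqP; rewrite eqn_leq k_le1.
  by rewrite muln1 expr1 comp_polyXr.
have q_pr := pdiv_prime k_gt1; set q := pdiv k in q_pr.
have [k' Dk] : exists k', k = (k' * q)%N by exists (k %/ q)%N; rewrite divnK ?pdiv_dvd.
have k'_gt0 : (0 < k')%N by move: k_gt0; rewrite Dk muln_gt0 => /andP[].
have q_dvd_r : (q %| r)%N.
  by have := sub_k_r q; rewrite !mem_primes q_pr k_gt0 r_gt0 pdiv_dvd => /(_ isT).
have rk'_gt0 : (0 < r * k')%N by rewrite muln_gt0 r_gt0.
have := Cyclotomic_comp_Xp q_pr rk'_gt0; rewrite dvdn_mulr // mulr1 IHk //.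
- by rewrite -comp_polyA comp_Xn_poly -exprM mulnCA [(q * k')%N]mulnC -Dk => <-.
- by rewrite Dk ltn_Pmulr ?prime_gt1.
move=> p; rewrite mem_primes => /and3P[p_pr _ p_dvd]; apply: sub_k_r.
by rewrite mem_primes p_pr k_gt0 Dk dvdn_mulr.
Qed.

Lemma Cyclotomic_primeM_modXn q m k (a : int) :
  prime q -> (0 < m)%N -> ~~ (q %| m)%N ->
  'X^(2 * k) %| 'Phi_m - (1 + a *: 'X^k) ->
  'X^(2 * k) %| 'Phi_(q * m) - (1 - a *: 'X^k).
Proof.
move=> q_pr m_gt0 qNm Phi_m_mod; apply: dvdp_Xn_inv.
have := dvdp_Xn_comp_Xn q Phi_m_mod.
rewrite Cyclotomic_comp_Xp // (negPf qNm) comp_polyD comp_polyC polyC1 comp_polyZ comp_Xn_poly.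
set Y := 'X^q ^+ k => comp_mod.
have Y_mod : 'X^(2 * k) %| Y.
  by rewrite /Y -exprM dvdp_exp2l // leq_mul ?prime_gt1.
have -> : 'Phi_(q * m) * (1 + a *: 'X^k) - 1 = ('Phi_(q * m) * 'Phi_m - (1 + a *: Y))
    - 'Phi_(q * m) * ('Phi_m - (1 + a *: 'X^k)) + a%:P * Y.
  by rewrite -!mul_polyC; ring.
apply/dvdp_add/dvdp_mull/Y_mod; apply/dvdp_sub/dvdp_mull/Phi_m_mod.
by apply: dvdp_trans comp_mod; rewrite dvdp_exp2l // leq_pmulr ?prime_gt0.
Qed.

Lemma Cyclotomic1 : 'Phi_1 = 'X - 1.
Proof. by rewrite -['X]expr1 -prod_Cyclotomic // big_seq1. Qed.

Lemma Cyclotomic_prime_modX2 q : prime q -> 'X^2 %| 'Phi_q - (1 + 'X).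
Proof.
move=> q_pr; have := @dvdp_Xn_inv _ 1 (-1) 'Phi_q.
rewrite muln1 expr1 scaleN1r opprK; apply.
have := Cyclotomic_comp_Xp q_pr (ltnSn 0).
rewrite dvdn1 gtn_eqF ?prime_gt1 // muln1 Cyclotomic1.
rewrite comp_polyB comp_polyX comp_polyC polyC1 -[1 - 'X]opprB mulrN => <-.
by rewrite opprB addrAC subrr add0r dvdpNr dvdp_exp2l ?prime_gt1.
Qed.

Lemma Cyclotomic_prod_primes_modX2 (s : seq nat) : uniq s -> all prime s -> s != [::] ->
  'X^2 %| 'Phi_(\prod_(p <- s) p) - (1 - (-1) ^+ size s *: 'X).
Proof.
elim: s => [|q s IHs] //= /andP[q_s s_uniq] /andP[q_pr s_pr] _; rewrite big_cons.
have [-> | s_neq0] := eqVneq s [::].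
  by rewrite big_nil muln1 expr1 scaleN1r opprK Cyclotomic_prime_modX2.
have r_gt0 : (0 < \prod_(p <- s) p)%N.
  by rewrite big_seq prodn_cond_gt0 // => p /(allP s_pr)/prime_gt0.
have qNr : ~~ (q %| \prod_(p <- s) p)%N.
  rewrite Euclid_dvd_prod // big_has; apply/hasPn => p p_s.
  rewrite (dvdn_prime2 q_pr (allP s_pr p p_s)).
  by apply/negP => /eqP q_eq_p; rewrite q_eq_p p_s in q_s.
have := Cyclotomic_primeM_modXn (k := 1) (a := - (-1) ^+ size s) q_pr r_gt0 qNr.
by rewrite muln1 expr1 [_ ^+ (size s).+1]exprS mulN1r !scaleNr; apply; apply: IHs.
Qed.

Lemma map_prod_Cyclotomic (R : nzRingType) n : (0 < n)%N ->
  \prod_(d <- divisors n) map_poly intr 'Phi_d = 'X^n - 1 :> {poly R}.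
Proof.
move=> n_gt0; rewrite -rmorph_prod prod_Cyclotomic //.
by rewrite rmorphB rmorph1 /= map_polyXn.
Qed.

Lemma Cyclotomic_root_unity (R : comNzRingType) m (x : R) : (0 < m)%N ->
  root (map_poly intr 'Phi_m) x -> x ^+ m = 1.
Proof.
move=> m_gt0 /rootP Phi_x; apply/eqP; rewrite -subr_eq0.
have := congr1 (horner^~ x) (map_prod_Cyclotomic R m_gt0).
rewrite horner_prod (bigD1_seq m) ?divisors_uniq -?dvdn_divisors //= Phi_x mul0r.
by rewrite !hornerE => <-.
Qed.

Lemma Cyclotomic_root_neq0 (R : comNzRingType) m (x : R) : (0 < m)%N ->
  root (map_poly intr 'Phi_m) x -> x != 0.
Proof.
move=> m_gt0 /(Cyclotomic_root_unity m_gt0); apply: contraPneq => ->.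
by rewrite expr0n gtn_eqF // => /eqP; rewrite eq_sym oner_eq0.
Qed.

Lemma Cyclotomic_root_prim (F : fieldType) m (x : F) : m%:R != 0 :> F ->
  root (map_poly intr 'Phi_m) x -> m.-primitive_root x.
Proof.
move=> m_neq0 Phi_x.
have m_gt0 : (0 < m)%N by rewrite lt0n; apply: contraNneq m_neq0 => ->.
have [k x_prim k_dvd_m] := prim_order_exists m_gt0 (Cyclotomic_root_unity m_gt0 Phi_x).
have [<- // | k_neq_m] := eqVneq k m; have k_gt0 := prim_order_gt0 x_prim.
have [e e_dvd_k Phi_e_x] : exists2 e, (e %| k)%N & root (map_poly intr 'Phi_e) x.
  have : ~~ ~~ root (\prod_(p <- [seq map_poly intr 'Phi_e | e <- divisors k]) p) x.
    by rewrite negbK big_map map_prod_Cyclotomic // /root !hornerE prim_expr_order // subrr.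
  rewrite root_bigmul => /allPn[_ /mapP[e e_div ->]].
  by rewrite negbK; exists e; rewrite // dvdn_divisors.
have e_div_m : e \in rem m (divisors m).
  rewrite mem_rem_uniq ?divisors_uniq // inE -dvdn_divisors // (dvdn_trans e_dvd_k) // andbT.
  by rewrite ltn_eqF // (leq_ltn_trans (dvdn_leq k_gt0 e_dvd_k)) // ltn_neqAle k_neq_m dvdn_leq.
have : map_poly intr 'Phi_m * map_poly intr 'Phi_e %| ('X^m - 1 : {poly F}).
  rewrite -map_prod_Cyclotomic // (big_rem m) -?dvdn_divisors //= (big_rem e e_div_m) /=.
  by rewrite mulrA dvdp_mulr.
move/(separable_coprime (separable_Xn_sub_1 m_neq0))/coprimep_root/(_ Phi_x).
by rewrite -/(root _ x) Phi_e_x.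
Qed.

Lemma Cyclotomic_root_dvd_card (F : finFieldType) m (x : F) : m%:R != 0 :> F ->
  root (map_poly intr 'Phi_m) x -> (m %| #|F|.-1)%N.
Proof.
move=> m_neq0 Phi_x; have x_prim := Cyclotomic_root_prim m_neq0 Phi_x.
have x_neq0 := Cyclotomic_root_neq0 (prim_order_gt0 x_prim) Phi_x.
rewrite (prim_order_dvd x_prim); apply/eqP/(mulfI x_neq0).
rewrite -exprS prednK; first by rewrite mulr1; exact: expf_card.
by apply/card_gt0P; exists x.
Qed.

Lemma exists_nonroot_natmul (Q : {poly int}) M : Q != 0 -> (0 < M)%N ->
  exists i, ~~ root Q (M * i.+1)%:Z.
Proof.
move=> Q_neq0 M_gt0; pose xs := [seq (M * i.+1)%:Z | i <- iota 0 (size Q)].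
have xs_uniq : uniq xs.
  by rewrite map_inj_uniq ?iota_uniq // => i j /eqP; rewrite eqz_nat eqn_pmul2l // => /eqP[].
have /allPn[_ /mapP[i _ ->] Q_i] : ~~ all (root Q) xs.
  by apply/negP => /(max_poly_roots Q_neq0)/(_ xs_uniq); rewrite size_map size_iota ltnn.
by exists i.
Qed.

Lemma exists_prime_mod1_gt m N : (0 < m)%N ->
  exists p, [/\ prime p, (N < p)%N & (m %| p.-1)%N].
Proof.
move=> m_gt0; set P := 'Phi_m.
have P_neqC (c : int) : P != c%:P.
  apply/eqP => P_c; have : (size P <= 1)%N by rewrite P_c size_polyC leq_b1.
  by rewrite size_Cyclotomic ltnS leqNgt totient_gt0 m_gt0.
have Q_neq0 : P * (P - 1) * (P + 1) != 0.
  by rewrite !mulf_neq0 ?subr_eq0 ?addr_eq0 -?polyC1 -?polyCN ?P_neqC.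
have mN_gt0 : (0 < m * N`!)%N by rewrite muln_gt0 m_gt0 fact_gt0.
have [i] := exists_nonroot_natmul Q_neq0 mN_gt0.
set a := (m * N`! * i.+1)%N; rewrite /root !hornerE -/P; set v := P.[a%:Z] => v_neq.
have v_gt1 : (1 < `|v|)%N by move: v_neq; case: v => [[|[|n]]|[|n]].
have q_pr := pdiv_prime v_gt1; set q := pdiv `|v| in q_pr.
have Fq_pchar := pchar_Fp q_pr.
have Phi_a : root (map_poly intr P) (a%:R : 'F_q).
  rewrite /root -[a%:R]/(a%:Z%:~R) horner_map -(dvdz_pcharf Fq_pchar); exact: pdiv_dvd.
have qNa : ~~ (q %| a)%N by rewrite (dvdn_pcharf Fq_pchar) (Cyclotomic_root_neq0 m_gt0 Phi_a).
exists q; split=> //.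
- rewrite ltnNge; apply: contra qNa => q_le_N.
  by rewrite dvdn_mulr // dvdn_mull // dvdn_fact // prime_gt0.
- rewrite -(card_Fp q_pr); apply: Cyclotomic_root_dvd_card Phi_a.
  by rewrite -(dvdn_pcharf Fq_pchar); apply: contra qNa => q_dvd_m; rewrite /a -mulnA dvdn_mulr.
Qed.

Lemma signrS_neq (s : int) n : s = 1 \/ s = -1 -> (-1) ^+ n <> s -> (-1) ^+ n.+1 = s.
Proof.
rewrite exprS mulN1r -signr_odd.
by case: (odd n); case=> -> //; rewrite ?expr1 ?expr0 ?opprK.
Qed.

Lemma exists_Cyclotomic_modX2 d (s : int) : s = 1 \/ s = -1 ->
  exists r, [/\ (0 < r)%N, {subset primes d <= primes r} & 'X^2 %| 'Phi_r - (1 - s *: 'X)].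
Proof.
move=> s_sign; have [q1 d_lt_q1 q1_pr] := prime_above d.
have [q2 q1_lt_q2 q2_pr] := prime_above q1.
set pd := primes d; set b := (-1) ^+ (size pd).+1 == s.
set L := pd ++ q1 :: (if b then [::] else [:: q2]).
have L_sign : (-1) ^+ size L = s.
  rewrite /L /b size_cat /=; case: eqP => [<-|s_neq]; first by rewrite addn1.
  by rewrite addn2; apply: signrS_neq.
have pd_big q : (d < q)%N -> q \in pd = false.
  move=> d_lt_q; apply/negbTE/negP; rewrite mem_primes => /and3P[_ d_gt0 /(dvdn_leq d_gt0)].
  by rewrite leqNgt d_lt_q.
have L_uniq : uniq L.
  rewrite cat_uniq primes_uniq /= pd_big //; case: ifP => _ //=.
  by rewrite pd_big ?inE ?ltn_eqF // (ltn_trans d_lt_q1).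
have L_prime : all prime L.
  by rewrite all_cat all_prime_primes /= q1_pr; case: ifP => _ //=; rewrite q2_pr.
have r_gt0 : (0 < \prod_(p <- L) p)%N.
  by rewrite big_seq prodn_cond_gt0 // => p /(allP L_prime)/prime_gt0.
exists (\prod_(p <- L) p); split=> //.
- move=> p p_pd; have p_L : p \in L by rewrite mem_cat p_pd.
  by rewrite mem_primes (allP L_prime) // r_gt0 (big_rem p p_L) dvdn_mulr.
- rewrite -L_sign; apply: Cyclotomic_prod_primes_modX2 => //.
  by rewrite -size_eq0 size_cat addnS.
Qed.

Theorem lemma7p2 (d : nat) (s : int) :
  (0 < d)%N -> (s = 1 \/ s = -1) ->
  forall N : nat, exists n : nat,
    [/\ (N < n)%N, special_form n &
        'X^(2 * d) %| 'Phi_n - (1 + s *: 'X^d)].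
Proof.
move=> d_gt0 s_sign N.
have [r [r_gt0 pd_sub_pr Phi_r_mod]] := exists_Cyclotomic_modX2 d s_sign.
set m := (r * d)%N; have m_gt0 : (0 < m)%N by rewrite muln_gt0 r_gt0.
have Phi_m_mod : 'X^(2 * d) %| 'Phi_m - (1 + (- s) *: 'X^d).
  have := dvdp_Xn_comp_Xn d Phi_r_mod.
  by rewrite -Cyclotomic_mul_comp // comp_polyB comp_polyC polyC1 comp_polyZ comp_polyX scaleNr.
have [p [p_pr N_lt_p m_dvd]] := exists_prime_mod1_gt N m_gt0.
have pNm : ~~ (p %| m)%N.
  have p_gt1 := prime_gt1 p_pr.
  by apply: contraL m_dvd => /(dvdn_leq m_gt0) p_le_m; rewrite gtnNdvd //; lia.
exists (p * m)%N; split.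
- exact: leq_trans N_lt_p (leq_pmulr p m_gt0).
- by exists p, m.
by have := Cyclotomic_primeM_modXn p_pr m_gt0 pNm Phi_m_mod; rewrite scaleNr opprK.
Qed.
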